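(* If $X\subset\mathbb{R}^N$ is a nondegenerate continuum and $x\in X$, then every tangent $T\in\mathrm{Tan}(X,x)$ has the property that each connected component of $T$ is unbounded.
   Context: For nonempty $A,B$, $\mathrm{exc}(A,B)=\sup_{a\in A}\inf_{b\in B}|a-b|$; closed sets $X_m$ converge to a closed set $X$ (Attouch–Wets) if for every $r>0$, $\mathrm{exc}(X_m\cap\overline{B}(\mathbf{0},r),X)\to0$ and $\mathrm{exc}(X\cap\overline{B}(\mathbf{0},r),X_m)\to0$. A closed set $T\ni\mathbf{0}$ is a tangent of a closed set $X$ at $x\in X$ if $r_m^{-1}(X-x)\to T$ in this topology for some $r_m\downarrow0$; $\mathrm{Tan}(X,x)$ is the set of tangents. A continuum is a compact connected set; nondegenerate means it has more than one point. *)

From HB Require Import structures.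
From mathcomp Require Import all_boot all_order all_algebra.
From mathcomp Require Import all_classical all_reals all_analysis.
Set Implicit Arguments. Unset Strict Implicit. Unset Printing Implicit Defensive.
Import Order.TTheory GRing.Theory Num.Theory.
Import numFieldNormedType.Exports.
Local Open Scope classical_set_scope.
Local Open Scope ring_scope.

(* Points of R^N are row vectors 'rV[R]_N (product topology = Euclidean topology). *)
Section Defs.
Variables (R : realType) (N : nat).
Notation V := 'rV[R]_N.

Definition enorm (v : V) : R := Num.sqrt (\sum_(i < N) v ord0 i ^+ 2).
Definition edist (a b : V) : R := enorm (a - b).

Definition cball0 (r : R) : set V := [set y | enorm y <= r].

Definition exc (A B : set V) : \bar R :=
  ereal_sup [set ereal_inf [set (edist a b)%:E | b in B] | a in A].

(* exc(A_m, B_m) -> 0 ; an empty A_m (sup = -oo) is treated as excess 0 *)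
Definition exc_to0 (A B : nat -> set V) : Prop :=
  forall eps : R, 0 < eps ->
    \forall m \near \oo, (exc (A m) (B m) <= eps%:E)%E.

Definition AW_cvg (Xm : nat -> set V) (X : set V) : Prop :=
  forall r : R, 0 < r ->
    exc_to0 (fun m => Xm m `&` cball0 r) (fun=> X) /\
    exc_to0 (fun=> X `&` cball0 r) Xm.

Definition blowup (X : set V) (x : V) (r : R) : set V :=
  [set r^-1 *: (y - x) | y in X].

Definition is_tangent (X : set V) (x : V) (T : set V) : Prop :=
  topology_structure.closed T /\ T 0 /\
  exists rm : nat -> R,
    (forall m, 0 < rm m) /\ (forall m, rm m.+1 <= rm m) /\ rm @ \oo --> 0 /\
    AW_cvg (fun m => blowup X x (rm m)) T.

Definition Tan (X : set V) (x : V) : set (set V) := [set T | is_tangent X x T].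

Definition ebounded (A : set V) : Prop := exists M : R, forall y, A y -> enorm y <= M.

Definition nondeg_continuum (X : set V) : Prop :=
  compact X /\ connected X /\ exists y z, X y /\ X z /\ y <> z.

End Defs.

From Pilot Require Import Defs.
From HB Require Import structures.
From mathcomp Require Import all_boot all_order all_algebra.
From mathcomp Require Import all_classical all_reals all_analysis.
From mathcomp Require Import lra.
Set Implicit Arguments. Unset Strict Implicit. Unset Printing Implicit Defensive.
Import Order.TTheory GRing.Theory Num.Theory.
Import numFieldNormedType.Exports.
Local Open Scope classical_set_scope.
Local Open Scope ring_scope.

(* If the component of [t] in [T] were bounded, say by [M], the Šura-Bura
   lemma would give a piece of [T] containing [t], contained in the ball of
   radius [M + 1] and clopen relative to the intersection of [T] with the ball
   of radius [M + 3]. Thickening this piece and its complement yields disjoint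
   open sets [G1], containing a neighbourhood of [t], and [G2], containing
   everything beyond radius [M + 2], which together cover the points of the
   ball of radius [M + 2] close to [T]. For large [m] the blow-up
   [r_m^-1 (X - x)] is connected, lies close to [T] on that ball, comes close
   to [t] and, as [X] has a point other than [x] while [r_m -> 0], leaves that
   ball: [G1] and [G2] disconnect it. *)

Lemma connected_open_partition (T : topologicalType) (A O1 O2 : set T) :
  connected A -> open O1 -> open O2 -> O1 `&` O2 = set0 ->
  A `<=` O1 `|` O2 -> A `&` O1 !=set0 -> A `&` O2 = set0.
Proof.
move=> cA oO1 oO2 O12 AO AO1; apply/seteqP; split => // v [Av O2v].
have AO1A : A `&` O1 = A.
  apply: cA => //; first by exists O1.
  exists (~` O2); first by rewrite closedC.
  apply/seteqP; split => u [Au Ou]; split => //.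
    by move=> O2u; have : (O1 `&` O2) u by []; rewrite O12.
  by case: (AO u Au).
have [_ O1v] : (A `&` O1) v by rewrite AO1A.
by have : (O1 `&` O2) v by []; rewrite O12.
Qed.

Section NormedSpace.
Variables (R : realType) (V : normedModType R).
Implicit Types (A B E P Z : set V) (d e : R).

Definition thickening E e := [set y | exists2 a, E a & `|y - a| < e].

Lemma open_thickening E e : open (thickening E e).
Proof.
rewrite openE => y [a Ea ya]; apply/nbhs_ballP.
exists (e - `|y - a|); first by rewrite /= subr_gt0.
move=> z; rewrite -ball_normE /ball_ /= => yz; exists a => //.
have := ler_normD (z - y) (y - a); rewrite addrA subrK (distrC z y) => tri.
lra.
Qed.

Lemma thickening_self E e : 0 < e -> E `<=` thickening E e.
Proof. by move=> e0 a Ea; exists a; rewrite // subrr normr0. Qed.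

Lemma thickening_disjoint A B d e :
  (forall p q, A p -> B q -> d <= `|p - q|) -> 2 * e <= d ->
  thickening A e `&` thickening B e = set0.
Proof.
move=> dAB ed; apply/seteqP; split => // y [[p Ap yp] [q Bq yq]].
have := dAB p q Ap Bq.
have := ler_normD (p - y) (y - q); rewrite addrA subrK (distrC p y); lra.
Qed.

Lemma thickening_norm_lt A b e v :
  (forall p, A p -> `|p| < b) -> thickening A e v -> `|v| < b + e.
Proof.
move=> Ab [p /Ab pb vp]; have := ler_normD p (v - p).
rewrite addrC subrK; lra.
Qed.

Lemma closed_norm_le b : closed [set v : V | `|v| <= b].
Proof.
apply: (@closed_comp _ _ _ [set x : R | x <= b]); last exact: closed_le.
by move=> v _; exact: norm_continuous.
Qed.

Lemma closed_norm_ge b : closed [set v : V | b <= `|v|].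
Proof.
apply: (@closed_comp _ _ _ [set x : R | b <= x]); last exact: closed_ge.
by move=> v _; exact: norm_continuous.
Qed.

Lemma open_norm_gt b : open [set v : V | b < `|v|].
Proof.
apply: (@open_comp _ _ _ [set x : R | b < x]); last exact: open_gt.
by move=> v _; exact: norm_continuous.
Qed.

Lemma compact_closed_dist_gt0 P Z : compact P -> closed Z -> P `&` Z = set0 ->
  exists2 d : R, 0 < d & forall p q, P p -> Z q -> d <= `|p - q|.
Proof.
move=> cP cZ PZ.
have : \forall d \near 0^'+, P `<=` [set p | forall q, Z q -> d <= `|p - q|].
  apply: (proj1 (compact_near_coveringP P) cP) => p Pp.
  have nZp : (~` Z) p by move=> Zp; have : (P `&` Z) p by []; rewrite PZ.
  have /nbhs_ballP [r r0 rZ] := open_nbhs_nbhs (conj (closed_openC cZ) nZp).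
  exists (ball p (r / 2), [set d : R | d < r / 2]); first split => /=.
  - by apply: nbhsx_ballx; rewrite divr_gt0.
  - by apply: nbhs_right_lt; rewrite divr_gt0.
  move=> [y d] [/= + dr] q Zq; rewrite -ball_normE /ball_ /= => py.
  have rpq : r <= `|p - q|.
    rewrite leNgt; apply/negP => pq; apply: (rZ q) => //.
    by rewrite -ball_normE.
  have := ler_normD (p - y) (y - q); rewrite addrA subrK; lra.
move=> dP; have [d [d0 Pd]] := filter_ex (filterI (nbhs_right_gt (0:R)) dP).
by exists d => // p q Pp; apply: Pd.
Qed.

Section QuasiComponent.
Variables (K : set V) (t : V).
Hypotheses (cK : compact K) (Kt : K t).

Definition clopen_nbhd_in U := [/\ U `<=` K, closed U, closed (K `\` U) & U t].

Definition quasi_component :=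
  [set y | K y /\ forall U, clopen_nbhd_in U -> U y].

Let clK : closed K := compact_closed (@norm_hausdorff _ V) cK.

Lemma clopen_nbhd_inT : clopen_nbhd_in K.
Proof. by split => //; rewrite setDv; exact: closed0. Qed.

Lemma clopen_nbhd_inI U W :
  clopen_nbhd_in U -> clopen_nbhd_in W -> clopen_nbhd_in (U `&` W).
Proof.
move=> [UK cU cKU Ut] [_ cW cKW Wt]; split => //.
- by move=> y [/UK].
- exact: closedI.
- by rewrite setDIr; exact: closedU.
Qed.

Lemma quasi_component_refl : quasi_component t.
Proof. by split => // U []. Qed.

Lemma quasi_component_sub : quasi_component `<=` K.
Proof. by move=> y []. Qed.

Lemma closed_quasi_component : closed quasi_component.
Proof.
have -> : quasi_component = K `&` \bigcap_(U in clopen_nbhd_in) U.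
  by apply/seteqP; split => y [Ky Uy]; split.
by apply: closedI => //; apply: closed_bigI => U [].
Qed.

(* The clopen neighbourhoods of [t] form a filter base, so by compactness of
   [A] a single one of them avoids [A]. *)
Lemma clopen_nbhd_in_avoid A : compact A -> A `&` quasi_component = set0 ->
  exists2 W, clopen_nbhd_in W & W `&` A = set0.
Proof.
move=> cA AQ.
pose F := filter_from clopen_nbhd_in
  (fun W => [set U | clopen_nbhd_in U /\ U `<=` W]).
have FF : Filter F.
  apply: filter_from_filter; first by exists K; exact: clopen_nbhd_inT.
  move=> U W CU CW; exists (U `&` W); first exact: clopen_nbhd_inI.
  by move=> U' [CU' U'UW]; split; split => // y /U'UW [].
have : \forall U \near F, A `<=` ~` U.
  apply: (proj1 (compact_near_coveringP A) cA) => a Aa.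
  have [U0 CU0 nU0a] : exists2 U0, clopen_nbhd_in U0 & ~ U0 a.
    have [Ka|nKa] := pselect (K a); last first.
      by exists K => //; exact: clopen_nbhd_inT.
    apply: contrapT => noU0; suff : (A `&` quasi_component) a by rewrite AQ.
    split => //; split => // U CU; apply: contrapT => nUa; apply: noU0.
    by exists U.
  have [_ cU0 _ _] := CU0.
  exists (~` U0, [set U | clopen_nbhd_in U /\ U `<=` U0]).
    split; last by exists U0.
    exact: open_nbhs_nbhs (conj (closed_openC cU0) nU0a).
  by move=> [y U] [/= nU0y [_ UU0]] /UU0.
case=> W CW WA; exists W => //; apply/seteqP; split => // y [Wy Ay].
exact: (WA W (conj CW (@subset_refl _ W)) y Ay).
Qed.

Lemma clopen_nbhd_in_restrict W G0 G1 : clopen_nbhd_in W ->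
  open G0 -> open G1 -> G0 `&` G1 = set0 -> W `<=` G0 `|` G1 -> G0 t ->
  clopen_nbhd_in (W `&` G0).
Proof.
move=> [WK cW cKW Wt] oG0 oG1 G01 WG G0t; split => //.
- by move=> y [/WK].
- have -> : W `&` G0 = W `&` ~` G1.
    apply/seteqP; split => y [Wy Gy]; split => //.
      by move=> G1y; have : (G0 `&` G1) y by []; rewrite G01.
    by case: (WG y Wy).
  by apply: closedI => //; rewrite closedC.
- have -> : K `\` (W `&` G0) = (K `\` W) `|` (W `&` ~` G0).
    apply/seteqP; split => y.
      move=> [Ky nWG0]; have [Wy|nWy] := pselect (W y); [right|left] => //.
      by split => // G0y; apply: nWG0.
    move=> [[Ky nWy]|[Wy nG0y]]; split; [done|by move=> [/nWy]|exact: WK|].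
    by move=> [_ /nG0y].
  by apply: closedU => //; apply: closedI => //; rewrite closedC.
Qed.

Lemma quasi_component_unsplit E0 E1 : closed E0 -> closed E1 ->
  E0 `&` E1 = set0 -> quasi_component = E0 `|` E1 -> E0 t -> E1 = set0.
Proof.
move=> cE0 cE1 E01 QE E0t.
have E0K : E0 `<=` K.
  by move=> y E0y; apply: quasi_component_sub; rewrite QE; left.
have [d d_gt0 dE] :=
  compact_closed_dist_gt0 (subclosed_compact cE0 cK E0K) cE1 E01.
have d2_gt0 : 0 < d / 2 by rewrite divr_gt0.
pose G0 := thickening E0 (d / 2); pose G1 := thickening E1 (d / 2).
have G01 : G0 `&` G1 = set0 by apply: thickening_disjoint dE _; lra.
pose A := K `&` ~` (G0 `|` G1).
have cA : compact A.
  apply: compact_closedI cK _; rewrite closedC.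
  by apply: openU; exact: open_thickening.
have AQ : A `&` quasi_component = set0.
  apply/seteqP; split => // y [[_ nG]]; rewrite QE => -[E0y|E1y]; apply: nG.
  - by left; exact: thickening_self.
  - by right; exact: thickening_self.
have [W CW WA] := clopen_nbhd_in_avoid cA AQ.
have WG : W `<=` G0 `|` G1.
  move=> y Wy; apply: contrapT => nG; suff : (W `&` A) y by rewrite WA.
  by have [WK _ _ _] := CW; split => //; split => //; exact: WK.
have CWG0 := clopen_nbhd_in_restrict CW (open_thickening _ _)
  (open_thickening _ _) G01 WG (thickening_self d2_gt0 E0t).
apply/seteqP; split => // y E1y.
have [_ /(_ _ CWG0) [_ G0y]] : quasi_component y by rewrite QE; right.
suff : (G0 `&` G1) y by rewrite G01.
by split => //; exact: thickening_self.
Qed.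

Lemma quasi_component_connected : connected quasi_component.
Proof.
move=> B [b Bb] [G oG BG] [F cF BF].
have cB : closed B by rewrite BF; exact: closedI closed_quasi_component cF.
have cB' : closed (quasi_component `&` ~` G).
  by apply: closedI closed_quasi_component _; rewrite closedC.
have BB' : B `&` (quasi_component `&` ~` G) = set0.
  by apply/seteqP; split => // y; rewrite BG => -[[_ Gy] [_ nGy]].
have QB : quasi_component = B `|` (quasi_component `&` ~` G).
  apply/seteqP; split => [y Qy|y [|[]//]]; last by rewrite BG => -[].
  by have [Gy|nGy] := pselect (G y); [left; rewrite BG|right].
have [Bt|nBt] := pselect (B t).
  by rewrite QB (quasi_component_unsplit cB cB' BB' QB Bt) setU0.
have B'B : (quasi_component `&` ~` G) `&` B = set0 by rewrite setIC.
have B't : (quasi_component `&` ~` G) t.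
  split; first exact: quasi_component_refl.
  by move=> Gt; apply: nBt; rewrite BG; split; [exact: quasi_component_refl|].
rewrite setUC in QB.
by rewrite (quasi_component_unsplit cB' cB B'B QB B't) in Bb.
Qed.

Lemma quasi_component_sub_component :
  quasi_component `<=` connected_component K t.
Proof.
apply: connected_component_max quasi_component_refl quasi_component_sub _.
exact: quasi_component_connected.
Qed.

Lemma clopen_nbhd_in_avoid_component S : compact S ->
  S `&` connected_component K t = set0 ->
  exists2 U, clopen_nbhd_in U & U `&` S = set0.
Proof.
move=> cS SC; apply: clopen_nbhd_in_avoid => //.
apply/seteqP; split => // y [Sy /quasi_component_sub_component Cy].
by have : (S `&` connected_component K t) y by []; rewrite SC.
Qed.

End QuasiComponent.
End NormedSpace.

Section RowVectors.
Variables (R : realType) (N : nat).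
Implicit Types (v : 'rV[R]_N) (A B T X : set 'rV[R]_N).

Lemma entry_le_norm v i : `|v ord0 i| <= `|v|.
Proof.
have /mapP[j _ ->] : `|v ord0 i| \in [seq `|v x.1 x.2| | x : 'I_1 * 'I_N].
  by apply/mapP; exists (ord0, i) => //=; rewrite mem_enum.
have -> : `|v| = mx_norm v by [].
by rewrite mx_normrE; apply/bigmax_geP; right => /=; exists j.
Qed.

Lemma norm_le_enorm v : `|v| <= enorm v.
Proof.
have -> : `|v| = mx_norm v by [].
rewrite mx_normrE; apply: bigmax_le => [|[i j] _]; first exact: sqrtr_ge0.
rewrite (ord1 i) /= /enorm -sqrtr_sqr; apply: ler_wsqrtr.
rewrite (bigD1 j) //= lerDl; apply: sumr_ge0 => k _; exact: sqr_ge0.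
Qed.

Lemma enorm_le_norm v : enorm v <= (N%:R + 1) * `|v|.
Proof.
have N_ge0 : 0 <= N%:R :> R by [].
have : \sum_(i < N) v ord0 i ^+ 2 <= ((N%:R + 1) * `|v|) ^+ 2.
  apply: le_trans (_ : \sum_(i < N) `|v| ^+ 2 <= _).
    apply: ler_sum => i _; rewrite -real_normK ?num_real //.
    by rewrite lerXn2r ?nnegrE ?entry_le_norm.
  by rewrite sumr_const card_ord -mulr_natr; nra.
by move=> /ler_wsqrtr; rewrite sqrtr_sqr ger0_norm.
Qed.

Lemma exc_lt_thickening A B e : (exc A B < e%:E)%E -> A `<=` thickening B e.
Proof.
move=> ABe a Aa.
have : (ereal_inf [set (Defs.edist a b)%:E | b in B] < e%:E)%E.
  by apply: le_lt_trans ABe; apply: ereal_sup_ubound; exists a.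
move=> /ereal_inf_lt [_ [b Bb <-]]; rewrite lte_fin => abe.
by exists b => //; apply: le_lt_trans abe; exact: norm_le_enorm.
Qed.

Lemma blowup_connected X x r : connected X -> connected (blowup X x r).
Proof.
move=> cX; apply: connected_continuous_connected cX _.
apply: continuous_subspaceT => y.
exact: cvgZr (cvgB cvg_id (cvg_cst x)).
Qed.

Lemma AW_cvg_thickening (Xs : nat -> set 'rV[R]_N) T r e :
  AW_cvg Xs T -> 0 < r -> 0 < e -> \forall m \near \oo,
    Xs m `&` cball0 r `<=` thickening T e /\
    T `&` cball0 r `<=` thickening (Xs m) e.
Proof.
move=> AW r_gt0 e_gt0; have [AW1 AW2] := AW r r_gt0.
have e2_gt0 : 0 < e / 2 by rewrite divr_gt0.
have exc_le A B : (exc A B <= (e / 2)%:E)%E -> A `<=` thickening B e.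
  move=> ABe; apply: exc_lt_thickening; apply: le_lt_trans ABe _.
  by rewrite lte_fin; lra.
by apply: filterS2 (AW1 _ e2_gt0) (AW2 _ e2_gt0) => m ? ?; split; exact: exc_le.
Qed.

Lemma blowup_meets_far X x w (s : nat -> R) c : X w -> w != x ->
  (forall m, 0 < s m) -> s @ \oo --> 0 -> 0 < c ->
  \forall m \near \oo, exists2 v, blowup X x (s m) v & c < `|v|.
Proof.
move=> Xw wx s_gt0 s0 c_gt0.
have wxc : 0 < `|w - x| / c by rewrite divr_gt0 // normr_gt0 subr_eq0.
apply: filterS (cvgr_dist_lt _ _ s0 _ wxc) => m.
rewrite sub0r normrN gtr0_norm // => smc.
exists ((s m)^-1 *: (w - x)); first by exists w.
rewrite normrZ gtr0_norm ?invr_gt0 // mulrC ltr_pdivlMr //.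
by rewrite mulrC -ltr_pdivlMr.
Qed.

(* [O1] thickens a piece of [T] around [t], clopen relative to a large ball
   and contained in the ball of radius [M + 1]; it exists by Šura-Bura. *)
Lemma bounded_component_separation T t M : closed T -> T t ->
  (forall v, connected_component T t v -> `|v| <= M) ->
  exists (c e : R) (O1 O2 : set 'rV[R]_N),
    [/\ M < c, 0 < e, open O1, open O2 & O1 `&` O2 = set0] /\
    [/\ ball t e `<=` O1, [set v | c < `|v|] `<=` O2
      & [set v | `|v| <= c] `&` thickening T e `<=` O1 `|` O2].
Proof.
move=> clT Tt CM; pose c := M + 2.
pose K := T `&` [set v | `|v| <= c + 1].
have clK : closed K by apply: closedI => //; exact: closed_norm_le.
have cK : compact K.
  apply: bounded_closed_compact clK; exists (c + 1).
  split; first exact: num_real.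
  by move=> b cb v [_ /= vc]; apply: le_trans vc _; exact: ltW.
have tM : `|t| <= M by apply: CM; exact: connected_component_refl.
have Kt : K t by split => //=; rewrite /c; lra.
pose S := K `&` [set v | M + 1 <= `|v|].
have cS : compact S by apply: compact_closedI cK _; exact: closed_norm_ge.
have SC : S `&` connected_component K t = set0.
  apply/seteqP; split => // v [[_ /= Mv] [D [Dt DK cD] Dv]].
  have : `|v| <= M by apply: CM; exists D => //; split => // y /DK [].
  lra.
have [U [UK clU clKU Ut] US] := clopen_nbhd_in_avoid_component cK Kt cS SC.
have UM v : U v -> `|v| < M + 1.
  move=> Uv; rewrite ltNge; apply/negP => Mv.
  suff : (U `&` S) v by rewrite US.
  by split => //; split => //; exact: UK.
have UKU : U `&` (K `\` U) = set0 by apply/seteqP; split => // v [? []].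
have [d d_gt0 dU] :=
  compact_closed_dist_gt0 (subclosed_compact clU cK UK) clKU UKU.
have [e [e_gt0 ed e1]] : exists e : R, [/\ 0 < e, 2 * e <= d & e <= 1 / 2].
  case: (leP d 1) => d1; [exists (d / 2)|exists (1 / 2)];
  by split; lra.
exists c, e, (thickening U e), (thickening (K `\` U) e `|` [set v | c < `|v|]).
split; split => //.
- by rewrite /c; lra.
- exact: open_thickening.
- by apply: openU; [exact: open_thickening|exact: open_norm_gt].
- rewrite setIUr (thickening_disjoint dU ed) set0U.
  apply/seteqP; split => // v [/(thickening_norm_lt UM) vM /= cv].
  by rewrite /c in cv; lra.
- move=> v; rewrite -ball_normE /= => tv; exists t => //.
  by rewrite distrC.
move=> v [/= vc [z Tz vz]].
have Kz : K z.
  split => //=; have := ler_normD v (z - v); rewrite addrC subrK distrC.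
  lra.
have [Uz|nUz] := pselect (U z); first by left; exists z.
by right; left; exists z.
Qed.

End RowVectors.

Theorem lemma2p5 (R : realType) (N : nat) (X : set 'rV[R]_N) (x : 'rV[R]_N) :
  nondeg_continuum X -> X x ->
  forall T : set 'rV[R]_N, Tan X x T ->
  forall t, T t -> ~ ebounded (connected_component T t).
Proof.
move=> [_ [cX [y [z [Xy [Xz yz]]]]]] _ T [clT [_ [rm [rm_gt0 [_ [rm0 AW]]]]]].
move=> t Tt [M CM].
have [c [e [G1 [G2 [[Mc e_gt0 oG1 oG2 G12] [tG1 cG2 TG12]]]]]] :=
  bounded_component_separation clT Tt
    (fun v Cv => le_trans (norm_le_enorm v) (CM v Cv)).
have tM : enorm t <= M by apply: CM; exact: connected_component_refl.
have c_gt0 : 0 < c := le_lt_trans (le_trans (sqrtr_ge0 _) tM) Mc.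
pose r := (N%:R + 1) * c.
have cr : c <= r by rewrite /r; have : 0 <= N%:R :> R by []; nra.
have [w Xw wx] : exists2 w, X w & w != x.
  have [yx|] := eqVneq y x; last by exists y.
  by exists z => //; apply/eqP => zx; apply: yz; rewrite yx zx.
have [m [[XmT TXm] [b Xmb cb]]] := filter_ex (filterI
  (AW_cvg_thickening AW (lt_le_trans c_gt0 cr) e_gt0)
  (blowup_meets_far Xw wx rm_gt0 rm0 c_gt0)).
set Xm := blowup X x (rm m) in XmT TXm Xmb.
have XmG : Xm `<=` G1 `|` G2.
  move=> v Xmv; have [vc|cv] := leP `|v| c; last by right; exact: cG2.
  apply: TG12; split => //; apply: XmT; split => //.
  by apply: le_trans (enorm_le_norm v) _; rewrite ler_wpM2l // addr_ge0.
have XmG1 : Xm `&` G1 !=set0.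
  have tr : enorm t <= r by apply: le_trans tM (le_trans (ltW Mc) cr).
  have [a Xma ta] := TXm t (conj Tt tr).
  by exists a; split => //; apply: tG1; rewrite -ball_normE.
have cXm : connected Xm by exact: blowup_connected.
have /seteqP[+ _] := connected_open_partition cXm oG1 oG2 G12 XmG XmG1.
by apply; split; [exact: Xmb|exact: cG2 cb].
Qed.
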